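(* Let $\mathcal{D}\subset\mathbb{R}^n$ be a parameter set, let $X$ and $Y$ be finite-dimensional real Hilbert spaces with norms $\|\cdot\|_X$, $\|\cdot\|_Y$, and for each $\mu\in\mathcal{D}$ let $m(\cdot,\cdot;\mu):X\times X\to\mathbb{R}$, $a(\cdot,\cdot;\mu):X\times X\to\mathbb{R}$, $b(\cdot,\cdot;\mu):X\times Y\to\mathbb{R}$ be bilinear forms such that $m(\cdot,\cdot;\mu)$ is symmetric with $m(v,v;\mu)>0$ for all $0\neq v\in X$, $a(\cdot,\cdot;\mu)$ is symmetric, and \[ \gamma_m(\mu)=\sup_{u\in X}\sup_{v\in X}\frac{m(u,v;\mu)}{\|u\|_X\|v\|_X}<\infty,\quad \gamma_a(\mu)=\sup_{u\in X}\sup_{v\in X}\frac{a(u,v;\mu)}{\|u\|_X\|v\|_X}<\infty, \] \[ \alpha_a(\mu)=\inf_{v\in X}\frac{a(v,v;\mu)}{\|v\|_X^2}>0,\qquad \beta(\mu)=\inf_{q\in Y}\sup_{v\in X}\frac{b(v,q;\mu)}{\|q\|_Y\|v\|_X}>0 . \] Let $K\in\mathbb{N}$, $\Delta t>0$, $\mathbb{K}=\{1,\dots,K\}$, and for each $k\in\mathbb{K}$ and $\mu\in\mathcal{D}$ let $f^k(\cdot;\mu)\in X'$, $g^k(\cdot;\mu)\in Y'$. Let the truth solution $u^k(\mu)\in X$, $p^k(\mu)\in Y$, $k\in\mathbb{K}$, be defined by $u^0(\mu)=0$ and, for $k\in\mathbb{K}$, \[ \tfrac{1}{\Delta t}m(u^k(\mu)-u^{k-1}(\mu),v;\mu)+a(u^k(\mu),v;\mu)+b(v,p^k(\mu);\mu)=f^k(v;\mu)\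 \ \forall v\in X,\qquad b(u^k(\mu),q;\mu)=g^k(q;\mu)\ \ \forall q\in Y. \] Let $X_N\subset X$, $Y_N\subset Y$, $N\in\{1,\dots,N_{\max}\}$, be subspaces such that for every $\mu\in\mathcal{D}$ there exist $u^k_N(\mu)\in X_N$, $p^k_N(\mu)\in Y_N$, $k\in\mathbb{K}$, with $u^0_N(\mu)=0$ and, for $k\in\mathbb{K}$, \[ \tfrac{1}{\Delta t}m(u^k_N(\mu)-u^{k-1}_N(\mu),v_N;\mu)+a(u^k_N(\mu),v_N;\mu)+b(v_N,p^k_N(\mu);\mu)=f^k(v_N;\mu)\ \ \forall v_N\in X_N, \] \[ b(u^k_N(\mu),q_N;\mu)=g^k(q_N;\mu)\ \ \forall q_N\in Y_N. \] Define the residuals $r^{1,k}_N(v;\mu)=f^k(v;\mu)-\tfrac{1}{\Delta t}m(u^k_N(\mu)-u^{k-1}_N(\mu),v;\mu)-a(u^k_N(\mu),v;\mu)-b(v,p^k_N(\mu);\mu)$ for $v\in X$ and $r^{2,k}_N(q;\mu)=g^k(q;\mu)-b(u^k_N(\mu),q;\mu)$ for $q\in Y$, and the errors $e^{u,k}_N(\mu)=u^k(\mu)-u^k_N(\mu)$. Let $\mu\in\mathcal{D}$, $N\in\{1,\dots,N_{\max}\}$, $k\in\mathbb{K}$, and let $\alpha_a^{\rm LB}(\mu),\gamma_a^{\rm UB}(\mu),\beta^{\rm LB}(\mu),\gamma_m^{\rm UB}(\mu)$ be positive numbers with $\alpha_a^{\rm LB}(\mu)\le\alpha_a(\mu)$,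 $\gamma_a(\mu)\le\gamma_a^{\rm UB}(\mu)$, $\beta^{\rm LB}(\mu)\le\beta(\mu)$, $\gamma_m(\mu)\le\gamma_m^{\rm UB}(\mu)$. Define \[ \Delta^{{\rm sym},k}_N(\mu)=\Bigg[\Delta t\sum_{j=1}^k\frac{\|r^{1,j}_N(\cdot;\mu)\|^2_{X'}}{\alpha_a^{\rm LB}(\mu)}+\frac{2}{\beta^{\rm LB}(\mu)}\Big(1+\sqrt{\frac{\gamma_a^{\rm UB}(\mu)}{\alpha_a^{\rm LB}(\mu)}}\Big)\|r^{1,j}_N(\cdot;\mu)\|_{X'}\|r^{2,j}_N(\cdot;\mu)\|_{Y'} \] \[ +\Big(\frac{\gamma_m^{\rm UB}(\mu)}{\Delta t}+\gamma_a^{\rm UB}(\mu)\Big)\frac{\|r^{2,j}_N(\cdot;\mu)\|^2_{Y'}}{(\beta^{\rm LB}(\mu))^2}\Bigg]^{1/2}. \] Then \[ \Big(\|e^{u,k}_N(\mu)\|_\mu^2+\Delta t\sum_{j=1}^k\|e^{u,j}_N(\mu)\|^2_{X,\mu}\Big)^{1/2}\le\Delta^{{\rm sym},k}_N(\mu). \]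
   Context: Here $\|v\|_\mu=\sqrt{m(v,v;\mu)}$ and $\|v\|_{X,\mu}=\sqrt{a(v,v;\mu)}$ for $v\in X$; $X'$, $Y'$ are the dual spaces with dual norms $\|r\|_{X'}=\sup_{0\ne v\in X}r(v)/\|v\|_X$ and $\|r\|_{Y'}=\sup_{0\ne q\in Y}r(q)/\|q\|_Y$. In the sum defining $\Delta^{{\rm sym},k}_N(\mu)$, all three terms are inside the sum over $j$ and multiplied by $\Delta t$. *)

From HB Require Import structures.
From mathcomp Require Import all_boot all_order all_algebra.
From mathcomp Require Import boolp classical_sets reals constructive_ereal ereal.
Set Implicit Arguments.
Unset Strict Implicit.
Unset Printing Implicit Defensive.
Import Order.TTheory GRing.Theory Num.Theory.
Local Open Scope ring_scope.
Local Open Scope classical_set_scope.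

Section Defs.
Context {R : realType}.

Definition bilinear_form (U V : lmodType R) (f : U -> V -> R) : Prop :=
  (forall (c : R) u1 u2 v, f (c *: u1 + u2) v = c * f u1 v + f u2 v) /\
  (forall (c : R) u v1 v2, f u (c *: v1 + v2) = c * f u v1 + f u v2).

Definition linear_functional (U : lmodType R) (r : U -> R) : Prop :=
  forall (c : R) u1 u2, r (c *: u1 + u2) = c * r u1 + r u2.

(* an inner product on U (makes a finite-dim vector space a Hilbert space) *)
Definition inner_product (U : lmodType R) (ip : U -> U -> R) : Prop :=
  bilinear_form ip /\ (forall u v, ip u v = ip v u) /\
  (forall v, v != 0 -> 0 < ip v v).

Definition ipnorm (U : lmodType R) (ip : U -> U -> R) (v : U) : R :=
  Num.sqrt (ip v v).

Definition cont_const (U : lmodType R) (nU : U -> R) (f : U -> U -> R) : \bar R :=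
  ereal_sup [set x | exists u v, u != 0 /\ v != 0 /\ x = (f u v / (nU u * nU v))%:E].

Definition coer_const (U : lmodType R) (nU : U -> R) (f : U -> U -> R) : \bar R :=
  ereal_inf [set x | exists v, v != 0 /\ x = (f v v / (nU v ^+ 2))%:E].

Definition infsup_const (U V : lmodType R) (nU : U -> R) (nV : V -> R)
  (b : U -> V -> R) : \bar R :=
  ereal_inf [set x | exists q, q != 0 /\
    x = ereal_sup [set y | exists v, v != 0 /\ y = (b v q / (nV q * nU v))%:E]].

Definition dual_norm (U : lmodType R) (nU : U -> R) (r : U -> R) : R :=
  sup [set x | exists v, v != 0 /\ x = r v / nU v].

Definition res1 (X Y : lmodType R) (fk : X -> R) (m a : X -> X -> R)
  (b : X -> Y -> R) (dt : R) (uk ukm1 : X) (pk : Y) : X -> R :=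
  fun v => fk v - dt^-1 * m (uk - ukm1) v - a uk v - b v pk.

Definition res2 (X Y : lmodType R) (gk : Y -> R) (b : X -> Y -> R) (uk : X) : Y -> R :=
  fun q => gk q - b uk q.

End Defs.

From HB Require Import structures.
From mathcomp Require Import all_boot all_order all_algebra.
From mathcomp Require Import boolp classical_sets reals constructive_ereal ereal.
From mathcomp Require Import ring lra.
Import Order.TTheory GRing.Theory Num.Theory.
Local Open Scope ring_scope.
Local Open Scope classical_set_scope.

(* Write e^j := u^j - u_N^j.  Subtracting the truth equations from the residuals gives
   r^{1,j}(v) = 1/dt m(e^j - e^{j-1}, v) + a(e^j, v) + b(v, p^j - p_N^j) and
   r^{2,j}(q) = b(e^j, q).
   The inf-sup condition and the Riesz representation provide z with
   b(z, p^j - p_N^j) = r^{2,j}(p^j - p_N^j) and beta ||z||_X <= ||r^{2,j}||_{Y'}, so testing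
   with v = e^j - z eliminates the pressure error.  Then
   2 m(e^j - e^{j-1}, e^j - z) >= ||e^j||_mu^2 - ||e^{j-1}||_mu^2 - ||z||_mu^2, continuity,
   coercivity and completing a square bound ||e^j||_mu^2 - ||e^{j-1}||_mu^2 + dt ||e^j||_{X,mu}^2
   by dt times the j-th summand of (Delta^{sym,k}_N)^2, and the sum over j telescopes. *)

Set Implicit Arguments.
Unset Strict Implicit.
Unset Printing Implicit Defensive.

Section LinearFunctional.
Variables (R : realType) (U : lmodType R) (r : U -> R).
Hypothesis hr : linear_functional r.

Lemma functionalD x y : r (x + y) = r x + r y.
Proof. by rewrite -[x in LHS]scale1r hr mul1r. Qed.

Lemma functional0 : r 0 = 0.
Proof. by apply: (addrI (r 0)); rewrite -functionalD !addr0. Qed.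

Lemma functionalZ c x : r (c *: x) = c * r x.
Proof. by rewrite -[c *: x]addr0 hr functional0 addr0. Qed.

Lemma functionalN x : r (- x) = - r x.
Proof. by rewrite -scaleN1r functionalZ mulN1r. Qed.

Lemma functionalB x y : r (x - y) = r x - r y.
Proof. by rewrite functionalD functionalN. Qed.

End LinearFunctional.

Section BilinearForm.
Variables (R : realType) (U V : lmodType R) (f : U -> V -> R).
Hypothesis hf : bilinear_form f.

Lemma bilinear_forml v : linear_functional (f^~ v).
Proof. by case: hf => H _ c x y; rewrite H. Qed.

Lemma bilinear_formr u : linear_functional (f u).
Proof. by case: hf => _ H c x y; rewrite H. Qed.

Lemma bilin0l v : f 0 v = 0.
Proof. exact: functional0 (bilinear_forml v). Qed.

Lemma bilinZl c x v : f (c *: x) v = c * f x v.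
Proof. exact: (functionalZ (bilinear_forml v) c x). Qed.

Lemma bilinNl x v : f (- x) v = - f x v.
Proof. exact: (functionalN (bilinear_forml v) x). Qed.

Lemma bilinBl x y v : f (x - y) v = f x v - f y v.
Proof. exact: (functionalB (bilinear_forml v) x y). Qed.

Lemma bilin0r u : f u 0 = 0.
Proof. exact: functional0 (bilinear_formr u). Qed.

Lemma bilinZr c u y : f u (c *: y) = c * f u y.
Proof. exact: (functionalZ (bilinear_formr u) c y). Qed.

Lemma bilinNr u y : f u (- y) = - f u y.
Proof. exact: (functionalN (bilinear_formr u) y). Qed.

Lemma bilinBr u x y : f u (x - y) = f u x - f u y.
Proof. exact: (functionalB (bilinear_formr u) x y). Qed.

End BilinearForm.

Section CauchySchwarz.
Variables (R : realType) (U : lmodType R) (f : U -> U -> R).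
Hypotheses (hf : bilinear_form f) (fsym : forall x y, f x y = f y x)
  (fpos : forall v, v != 0 -> 0 < f v v).

Lemma form_ge0 v : 0 <= f v v.
Proof. by have [->|/fpos/ltW//] := eqVneq v 0; rewrite bilin0l. Qed.

Lemma form_sqrt_sqr v : Num.sqrt (f v v) ^+ 2 = f v v.
Proof. exact/sqr_sqrtr/form_ge0. Qed.

Lemma form_opp v : f (- v) (- v) = f v v.
Proof. by rewrite bilinNl // bilinNr // opprK. Qed.

Lemma cauchy_schwarz_sqr x y : f x y ^+ 2 <= f x x * f y y.
Proof.
have [->|/fpos fy0] := eqVneq y 0; first by rewrite !bilin0r // expr0n mulr0.
pose t := f x y / f y y.
have ty : t * f y y = f x y by rewrite mulfVK ?gt_eqF.
have := form_ge0 (x - t *: y).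
rewrite bilinBl // !bilinBr // !bilinZl // !bilinZr // (fsym y x) ty => h.
have h2 : 0 <= f x x - t * f x y by lra.
by have := mulr_ge0 h2 (ltW fy0); rewrite mulrBl mulrAC ty expr2 subr_ge0.
Qed.

Lemma cauchy_schwarz x y : f x y <= Num.sqrt (f x x) * Num.sqrt (f y y).
Proof.
rewrite -sqrtrM ?form_ge0 //; apply: le_trans (ler_norm _) _.
by rewrite -sqrtr_sqr ler_wsqrtr // cauchy_schwarz_sqr.
Qed.

Lemma form_backward_difference x y z :
  f x x - f y y - f z z <= 2 * f (x - y) (x - z).
Proof.
have := form_ge0 (x - y - z).
rewrite !bilinBl // !bilinBr // (fsym y x) (fsym z x) (fsym z y); lra.
Qed.

End CauchySchwarz.

Section Riesz.
Variables (R : realType) (U : vectType R).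

Definition lfun_of_functional (r : U -> R) (hr : linear_functional r) :
    'Hom(U, R^o) :=
  linfun (HB.pack (r : U -> R^o) (GRing.isLinear.Build R U R^o *:%R r hr)
          : {linear U -> R^o}).

Lemma lfun_of_functionalE r (hr : linear_functional r) v :
  lfun_of_functional hr v = r v.
Proof. exact: lfunE. Qed.

Variable ip : U -> U -> R.
Hypothesis hip : inner_product ip.

Let ip_bil : bilinear_form ip. Proof. by case: hip. Qed.

Let ip_lfun (w : U) : 'Hom(U, R^o) :=
  lfun_of_functional (bilinear_formr ip_bil w).

Let ip_lfun_linear : linear_for *:%R ip_lfun.
Proof.
move=> c x y; apply/lfunP => z.
by rewrite add_lfunE scale_lfunE !lfun_of_functionalE; case: ip_bil => ->.
Qed.

Lemma riesz_representation r : linear_functional r ->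
  exists w, forall v, r v = ip w v.
Proof.
move=> hr.
pose Phi : {linear U -> 'Hom(U, R^o)} := HB.pack ip_lfun
  (GRing.isLinear.Build R U 'Hom(U, R^o) *:%R ip_lfun ip_lfun_linear).
pose P := linfun Phi.
have PE w v : P w v = ip w v by rewrite lfunE lfun_of_functionalE.
have P_inj : lker P == 0%VS.
  apply/lker0P => x y Pxy; apply/eqP; rewrite -subr_eq0; apply/negPn/negP.
  by case: hip => _ [_ pos] /pos; rewrite bilinBl // -!PE Pxy subrr ltxx.
have P_onto : (P @: fullv)%VS = fullv.
  apply/eqP; rewrite eqEdim subvf limg_dim_eq; last by rewrite (eqP P_inj) capv0.
  rewrite !dimvf; exact: eq_leq (muln1 (dim U)).
have : lfun_of_functional hr \in (P @: fullv)%VS by rewrite P_onto memvf.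
case/memv_imgP => w _ Hw; exists w => v.
by rewrite -PE -Hw lfun_of_functionalE.
Qed.

End Riesz.

Section DualNorm.
Variables (R : realType) (U : vectType R) (ip : U -> U -> R).
Hypothesis hip : inner_product ip.

Let ip_bil : bilinear_form ip. Proof. by case: hip. Qed.
Let ip_sym : forall x y, ip x y = ip y x. Proof. by case: hip => _ []. Qed.
Let ip_pos : forall v, v != 0 -> 0 < ip v v. Proof. by case: hip => _ []. Qed.

Lemma ipnorm_gt0 v : v != 0 -> 0 < ipnorm ip v.
Proof. by move=> /ip_pos; rewrite sqrtr_gt0. Qed.

Lemma ipnorm_ge0 v : 0 <= ipnorm ip v.
Proof. exact: sqrtr_ge0. Qed.

Lemma ipnormZ c v : ipnorm ip (c *: v) = `|c| * ipnorm ip v.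
Proof.
by rewrite /ipnorm bilinZl // bilinZr // mulrA -expr2 sqrtrM ?sqrtr_sqr ?sqr_ge0.
Qed.

Lemma ipnormN v : ipnorm ip (- v) = ipnorm ip v.
Proof. by rewrite /ipnorm form_opp. Qed.

Variable r : U -> R.
Hypothesis hr : linear_functional r.

Lemma dual_norm_has_ubound :
  has_ubound [set x | exists v, v != 0 /\ x = r v / ipnorm ip v].
Proof.
have [w rw] := riesz_representation hip hr.
exists (ipnorm ip w) => _ [v [v0 ->]].
by rewrite rw ler_pdivrMr ?ipnorm_gt0 // cauchy_schwarz.
Qed.

Lemma dual_normP v : r v <= dual_norm (ipnorm ip) r * ipnorm ip v.
Proof.
have [->|v0] := eqVneq v 0.
  by rewrite functional0 // /ipnorm bilin0l // sqrtr0 mulr0.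
rewrite -ler_pdivrMr ?ipnorm_gt0 //.
by apply: (ub_le_sup dual_norm_has_ubound); exists v.
Qed.

Lemma dual_norm_abs v : `|r v| <= dual_norm (ipnorm ip) r * ipnorm ip v.
Proof.
by rewrite ler_norml dual_normP lerNl -(functionalN hr) -ipnormN dual_normP.
Qed.

Lemma dual_norm_ge0 : 0 <= dual_norm (ipnorm ip) r.
Proof.
have [[v v0]|none] := pselect (exists v : U, v != 0).
  by rewrite -(pmulr_lge0 _ (ipnorm_gt0 v0)); apply: le_trans (dual_norm_abs v).
rewrite /dual_norm reals.sup_out // => -[[_ [v [v0 _]]] _].
by apply: none; exists v.
Qed.

End DualNorm.

Section StabilityConstants.
Variables (R : realType) (X : vectType R) (ipX : X -> X -> R).
Hypothesis hX : inner_product ipX.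

Let ipX_bil : bilinear_form ipX. Proof. by case: hX. Qed.
Let ipX_pos : forall v, v != 0 -> 0 < ipX v v. Proof. by case: hX => _ []. Qed.

Lemma cont_const_bound (f : X -> X -> R) g : bilinear_form f ->
  (cont_const (ipnorm ipX) f <= g%:E)%E -> forall v, f v v <= g * ipX v v.
Proof.
move=> hf hg v; have [->|v0] := eqVneq v 0; first by rewrite !bilin0l // mulr0.
have : ((f v v / (ipnorm ipX v * ipnorm ipX v))%:E <= g%:E)%E.
  by apply: le_trans hg; apply: ereal_sup_ubound; exists v, v.
by rewrite lee_fin -expr2 form_sqrt_sqr // ler_pdivrMr // ipX_pos.
Qed.

Lemma coer_const_bound (f : X -> X -> R) l : bilinear_form f ->
  (l%:E <= coer_const (ipnorm ipX) f)%E -> forall v, l * ipX v v <= f v v.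
Proof.
move=> hf hl v; have [->|v0] := eqVneq v 0; first by rewrite !bilin0l // mulr0.
have : (l%:E <= (f v v / (ipnorm ipX v ^+ 2))%:E)%E.
  by apply: le_trans hl _; apply: ereal_inf_lbound; exists v.
by rewrite lee_fin form_sqrt_sqr // ler_pdivlMr // ipX_pos.
Qed.

Lemma coer_const_form_gt0 (f : X -> X -> R) l : bilinear_form f -> 0 < l ->
  (l%:E <= coer_const (ipnorm ipX) f)%E -> forall v, v != 0 -> 0 < f v v.
Proof.
move=> hf l0 hl v v0; apply: lt_le_trans (coer_const_bound hf hl v).
by rewrite mulr_gt0 ?ipX_pos.
Qed.

Lemma sqrt_cont_const_bound (f : X -> X -> R) g : bilinear_form f -> 0 <= g ->
  (cont_const (ipnorm ipX) f <= g%:E)%E ->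
  forall v, Num.sqrt (f v v) <= Num.sqrt g * ipnorm ipX v.
Proof.
by move=> hf g0 hg v; rewrite -sqrtrM // ler_wsqrtr // cont_const_bound.
Qed.

Lemma sqrt_coer_const_bound (f : X -> X -> R) l : bilinear_form f ->
  (l%:E <= coer_const (ipnorm ipX) f)%E ->
  forall v, Num.sqrt l * ipnorm ipX v <= Num.sqrt (f v v).
Proof.
move=> hf hl v; case: (leP 0 l) => [l0|/ltW l0].
  by rewrite -sqrtrM // ler_wsqrtr // coer_const_bound.
by rewrite (@ler0_sqrtr _ l) // mul0r sqrtr_ge0.
Qed.

End StabilityConstants.

Lemma infsup_const_bound (R : realType) (X Y : vectType R)
    (ipX : X -> X -> R) (ipY : Y -> Y -> R) (b : X -> Y -> R) l q M :
  inner_product ipX -> inner_product ipY ->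
  (l%:E <= infsup_const (ipnorm ipX) (ipnorm ipY) b)%E -> q != 0 ->
  (forall v, v != 0 -> b v q <= M * ipnorm ipX v) -> l * ipnorm ipY q <= M.
Proof.
move=> hX hY hl q0 hM; have qn0 := ipnorm_gt0 hY q0.
rewrite -ler_pdivlMr // -lee_fin; apply: le_trans hl _.
apply: le_trans (ereal_inf_lbound _) _; first by exists q.
apply: ge_ereal_sup => _ [v [v0 ->]]; rewrite lee_fin.
by rewrite ler_pdivrMr ?mulr_gt0 ?(ipnorm_gt0 hX) // mulrA divfK ?gt_eqF ?hM.
Qed.

Section EnergyStep.
Variables (R : realType) (X Y : vectType R) (ipX : X -> X -> R) (ipY : Y -> Y -> R).
Hypotheses (hX : inner_product ipX) (hY : inner_product ipY).
Variables (m a : X -> X -> R) (b : X -> Y -> R) (dt aLB gaUB bLB gmUB : R).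
Hypotheses (mbil : bilinear_form m) (msym : forall v w, m v w = m w v)
  (mpos : forall v, v != 0 -> 0 < m v v).
Hypotheses (abil : bilinear_form a) (asym : forall v w, a v w = a w v).
Hypothesis (bbil : bilinear_form b).
Hypotheses (dt0 : 0 < dt) (aLB0 : 0 < aLB) (gaUB0 : 0 < gaUB) (bLB0 : 0 < bLB)
  (gmUB0 : 0 < gmUB).
Hypotheses (aLB_le : (aLB%:E <= coer_const (ipnorm ipX) a)%E)
  (gaUB_ge : (cont_const (ipnorm ipX) a <= gaUB%:E)%E)
  (bLB_le : (bLB%:E <= infsup_const (ipnorm ipX) (ipnorm ipY) b)%E)
  (gmUB_ge : (cont_const (ipnorm ipX) m <= gmUB%:E)%E).

Let ipX_bil : bilinear_form ipX. Proof. by case: hX. Qed.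
Let ipX_sym : forall x y, ipX x y = ipX y x. Proof. by case: hX => _ []. Qed.
Let ipX_pos : forall v, v != 0 -> 0 < ipX v v. Proof. by case: hX => _ []. Qed.
Let a_pos := coer_const_form_gt0 hX abil aLB0 aLB_le.

Lemma infsup_lifting (r2 : Y -> R) (q : Y) : linear_functional r2 ->
  exists z, b z q = r2 q /\ bLB * ipnorm ipX z <= dual_norm (ipnorm ipY) r2.
Proof.
move=> hr2; have [->|q0] := eqVneq q 0.
  exists 0; rewrite bilin0l // functional0 // /ipnorm bilin0l // sqrtr0 mulr0.
  by split; last exact: dual_norm_ge0.
have [w bw] := riesz_representation hX (bilinear_forml bbil q).
have w_ge : bLB * ipnorm ipY q <= ipnorm ipX w.
  apply: (infsup_const_bound hX hY bLB_le q0) => v _.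
  by rewrite bw cauchy_schwarz.
have w_gt0 : 0 < ipnorm ipX w.
  by apply: lt_le_trans w_ge; rewrite mulr_gt0 ?ipnorm_gt0.
have ww : ipX w w = ipnorm ipX w ^+ 2 by rewrite form_sqrt_sqr.
exists ((r2 q / ipnorm ipX w ^+ 2) *: w); split.
  by rewrite bw bilinZr // -ww divfK // ww gt_eqF ?exprn_gt0.
rewrite ipnormZ //.
have -> : `|r2 q / ipnorm ipX w ^+ 2| * ipnorm ipX w = `|r2 q| / ipnorm ipX w.
  rewrite normrM normfV normrX [`|ipnorm _ _|]ger0_norm ?ipnorm_ge0 //.
  by field; rewrite gt_eqF.
rewrite mulrA ler_pdivrMr //.
apply: le_trans (ler_wpM2l (ltW bLB0) (dual_norm_abs hY hr2 q)) _.
by rewrite mulrCA ler_wpM2l ?dual_norm_ge0.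
Qed.

Definition delta_sym_term (n1 n2 : R) : R :=
  n1 ^+ 2 / aLB + 2 / bLB * (1 + Num.sqrt (gaUB / aLB)) * n1 * n2
  + (gmUB / dt + gaUB) * (n2 ^+ 2 / bLB ^+ 2).

Lemma delta_sym_termE n1 n2 :
  dt * delta_sym_term n1 n2
  = dt * ((Num.sqrt gaUB * (n2 / bLB) + n1 / Num.sqrt aLB) ^+ 2 + 2 * (n1 * (n2 / bLB)))
    + gmUB * (n2 / bLB) ^+ 2.
Proof.
set sa := Num.sqrt aLB; set sg := Num.sqrt gaUB.
have aLB_sa : aLB = sa ^+ 2 by rewrite sqr_sqrtr ?ltW.
have gaUB_sg : gaUB = sg ^+ 2 by rewrite sqr_sqrtr ?ltW.
rewrite /delta_sym_term sqrtrM ?(ltW gaUB0) // sqrtrV ?(ltW aLB0) // -/sa -/sg.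
by rewrite aLB_sa gaUB_sg; field; rewrite !gt_eqF ?sqrtr_gt0.
Qed.

Lemma energy_step (r1 : X -> R) (r2 : Y -> R) (e e' : X) (q : Y) :
  linear_functional r1 -> linear_functional r2 ->
  (forall v, r1 v = dt^-1 * m (e - e') v + a e v + b v q) ->
  (forall w, r2 w = b e w) ->
  m e e - m e' e' + dt * a e e <=
  dt * delta_sym_term (dual_norm (ipnorm ipX) r1) (dual_norm (ipnorm ipY) r2).
Proof.
move=> hr1 hr2 r1E r2E.
have [z [bz z_le]] := infsup_lifting q hr2.
set n1 := dual_norm _ r1; set n2 := dual_norm _ r2.
have n1_ge0 : 0 <= n1 by exact: dual_norm_ge0.
set rho := n2 / bLB.
have rho_ge0 : 0 <= rho by rewrite divr_ge0 ?dual_norm_ge0 ?ltW.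
have z_le_rho : ipnorm ipX z <= rho by rewrite ler_pdivlMr // mulrC.
have r1_test : r1 e - r1 z = dt^-1 * m (e - e') (e - z) + a e e - a e z.
  by rewrite -functionalB // r1E bilinBl // bz r2E subrr addr0 (bilinBr abil) addrA.
have m_diff := form_backward_difference mbil msym mpos e e' z.
set sa := Num.sqrt aLB; set sg := Num.sqrt gaUB; set A := Num.sqrt (a e e).
have sa_gt0 : 0 < sa by rewrite sqrtr_gt0.
have sg_ge0 : 0 <= sg by exact: sqrtr_ge0.
have A_ge0 : 0 <= A by exact: sqrtr_ge0.
have aee : a e e = A ^+ 2 by rewrite form_sqrt_sqr.
have r1e_le : r1 e <= n1 / sa * A.
  apply: le_trans (dual_normP hX hr1 e) _.
  by rewrite -mulrA ler_wpM2l // ler_pdivlMl // sqrt_coer_const_bound.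
have aez_le : a e z <= A * (sg * rho).
  apply: le_trans (cauchy_schwarz abil asym a_pos e z) _.
  rewrite ler_wpM2l //.
  apply: le_trans (sqrt_cont_const_bound hX abil (ltW gaUB0) gaUB_ge z) _.
  by rewrite ler_wpM2l.
have r1z_le : - r1 z <= n1 * rho.
  apply: le_trans (ler_norm _) _; rewrite normrN.
  by apply: le_trans (dual_norm_abs hX hr1 z) _; rewrite ler_wpM2l.
have mzz_le : m z z <= gmUB * rho ^+ 2.
  apply: le_trans (cont_const_bound hX mbil gmUB_ge z) _.
  rewrite ler_wpM2l ?(ltW gmUB0) // -(form_sqrt_sqr ipX_bil ipX_pos).
  by rewrite ler_sqr ?nnegrE.
have young : 2 * (r1 e - r1 z + a e z) - a e e
    <= (sg * rho + n1 / sa) ^+ 2 + 2 * (n1 * rho).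
  rewrite aee; have := sqr_ge0 (A - (sg * rho + n1 / sa)); rewrite !expr2; nra.
rewrite delta_sym_termE -/rho -/sa -/sg.
have m_test : m (e - e') (e - z) = dt * (r1 e - r1 z - a e e + a e z).
  by rewrite r1_test; field; rewrite gt_eqF.
have := ler_wpM2l (ltW dt0) young; lra.
Qed.

End EnergyStep.

Lemma telescoping_energy (R : realDomainType) (M A T : nat -> R) (k : nat) :
  M 0%N = 0 -> (forall j, (1 <= j <= k)%N -> M j - M j.-1 + A j <= T j) ->
  M k + \sum_(1 <= j < k.+1) A j <= \sum_(1 <= j < k.+1) T j.
Proof.
move=> M0; elim: k => [_|k IH step]; first by rewrite M0 !big_geq // addr0.
have IHk : M k + \sum_(1 <= j < k.+1) A j <= \sum_(1 <= j < k.+1) T j.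
  by apply: IH => j /andP[j1 jk]; apply: step; rewrite j1 leqW.
have stepk : M k.+1 - M k + A k.+1 <= T k.+1 by apply: step; rewrite leqnn.
rewrite !(big_nat_recr k.+1) //=; lra.
Qed.

Section Residuals.
Variables (R : realType) (X Y : lmodType R).
Variables (m a : X -> X -> R) (b : X -> Y -> R) (dt : R).
Hypotheses (mbil : bilinear_form m) (abil : bilinear_form a) (bbil : bilinear_form b).

Lemma res1_functional (fk : X -> R) uk ukm1 pk : linear_functional fk ->
  linear_functional (res1 fk m a b dt uk ukm1 pk).
Proof.
move=> hf c x y; rewrite /res1 hf (bilinear_formr mbil) (bilinear_formr abil).
by rewrite (bilinear_forml bbil); ring.
Qed.

Lemma res2_functional (gk : Y -> R) uk : linear_functional gk ->
  linear_functional (res2 gk b uk).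
Proof. by move=> hg c x y; rewrite /res2 hg (bilinear_formr bbil); ring. Qed.

Lemma res1_error (fk : X -> R) u u' p uN uN' pN :
  (forall v, dt^-1 * m (u - u') v + a u v + b v p = fk v) ->
  forall v, res1 fk m a b dt uN uN' pN v
    = dt^-1 * m ((u - uN) - (u' - uN')) v + a (u - uN) v + b v (p - pN).
Proof.
move=> truth v; rewrite /res1 -truth !bilinBl // bilinBr //; ring.
Qed.

Lemma res2_error (gk : Y -> R) u uN :
  (forall q, b u q = gk q) -> forall q, res2 gk b uN q = b (u - uN) q.
Proof. by move=> truth q; rewrite /res2 -truth bilinBl. Qed.

End Residuals.

Theorem proposition2p2 (R : realType) (n : nat) (X Y : vectType R)
  (ipX : X -> X -> R) (ipY : Y -> Y -> R) (D : set 'rV[R]_n)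
  (m a : 'rV[R]_n -> X -> X -> R) (b : 'rV[R]_n -> X -> Y -> R)
  (K : nat) (dt : R)
  (f : nat -> 'rV[R]_n -> X -> R) (g : nat -> 'rV[R]_n -> Y -> R)
  (u : 'rV[R]_n -> nat -> X) (p : 'rV[R]_n -> nat -> Y)
  (Nmax : nat) (XN : nat -> {vspace X}) (YN : nat -> {vspace Y})
  (uN : nat -> 'rV[R]_n -> nat -> X) (pN : nat -> 'rV[R]_n -> nat -> Y)
  (mu : 'rV[R]_n) (N k : nat) (aLB gaUB bLB gmUB : R) :
  inner_product ipX -> inner_product ipY ->
  (forall nu, D nu ->
     [/\ bilinear_form (m nu), (forall v w, m nu v w = m nu w v)
       & (forall v, v != 0 -> 0 < m nu v v)]) ->
  (forall nu, D nu ->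
     bilinear_form (a nu) /\ (forall v w, a nu v w = a nu w v)) ->
  (forall nu, D nu -> bilinear_form (b nu)) ->
  (forall nu, D nu ->
     [/\ (cont_const (ipnorm ipX) (m nu) < +oo)%E,
         (cont_const (ipnorm ipX) (a nu) < +oo)%E,
         (0 < coer_const (ipnorm ipX) (a nu))%E
       & (0 < infsup_const (ipnorm ipX) (ipnorm ipY) (b nu))%E]) ->
  0 < dt ->
  (forall j nu, (1 <= j <= K)%N -> D nu ->
     linear_functional (f j nu) /\ linear_functional (g j nu)) ->
  (forall nu, D nu -> u nu 0%N = 0 /\
     forall j, (1 <= j <= K)%N ->
       (forall v, dt^-1 * m nu (u nu j - u nu j.-1) v + a nu (u nu j) v
                  + b nu v (p nu j) = f j nu v) /\
       (forall q, b nu (u nu j) q = g j nu q)) ->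
  (forall N', (1 <= N' <= Nmax)%N -> forall nu, D nu ->
     uN N' nu 0%N = 0 /\
     forall j, (1 <= j <= K)%N ->
       [/\ uN N' nu j \in XN N', pN N' nu j \in YN N',
         (forall v, v \in XN N' ->
            dt^-1 * m nu (uN N' nu j - uN N' nu j.-1) v + a nu (uN N' nu j) v
              + b nu v (pN N' nu j) = f j nu v)
       & (forall q, q \in YN N' -> b nu (uN N' nu j) q = g j nu q)]) ->
  D mu -> (1 <= N <= Nmax)%N -> (1 <= k <= K)%N ->
  0 < aLB -> 0 < gaUB -> 0 < bLB -> 0 < gmUB ->
  (aLB%:E <= coer_const (ipnorm ipX) (a mu))%E ->
  (cont_const (ipnorm ipX) (a mu) <= gaUB%:E)%E ->
  (bLB%:E <= infsup_const (ipnorm ipX) (ipnorm ipY) (b mu))%E ->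
  (cont_const (ipnorm ipX) (m mu) <= gmUB%:E)%E ->
  let e := fun j => u mu j - uN N mu j in
  let r1 := fun j => dual_norm (ipnorm ipX)
              (res1 (f j mu) (m mu) (a mu) (b mu) dt (uN N mu j) (uN N mu j.-1) (pN N mu j)) in
  let r2 := fun j => dual_norm (ipnorm ipY) (res2 (g j mu) (b mu) (uN N mu j)) in
  let Delta := Num.sqrt (dt * \sum_(1 <= j < k.+1)
        (r1 j ^+ 2 / aLB
         + 2 / bLB * (1 + Num.sqrt (gaUB / aLB)) * r1 j * r2 j
         + (gmUB / dt + gaUB) * (r2 j ^+ 2 / bLB ^+ 2))) in
  Num.sqrt ((Num.sqrt (m mu (e k) (e k))) ^+ 2
            + dt * \sum_(1 <= j < k.+1) (Num.sqrt (a mu (e j) (e j))) ^+ 2)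
  <= Delta.
Proof.
move=> hX hY Hm Ha Hb _ dt0 Hfg Htruth Hred Dmu HN Hk aLB0 gaUB0 bLB0 gmUB0
  aLB_le gaUB_ge bLB_le gmUB_ge /=.
have [mbil msym mpos] := Hm mu Dmu.
have [abil asym] := Ha mu Dmu.
have bbil := Hb mu Dmu.
have a_pos := coer_const_form_gt0 hX abil aLB0 aLB_le.
have [u0 truth] := Htruth mu Dmu.
have [uN0 _] := Hred N HN mu Dmu.
have kK : (k <= K)%N by case/andP: Hk.
apply: ler_wsqrtr; rewrite form_sqrt_sqr //.
under eq_bigr do rewrite form_sqrt_sqr //.
rewrite !mulr_sumr; apply: (telescoping_energy
  (M := fun j => m mu (u mu j - uN N mu j) (u mu j - uN N mu j))).
  by rewrite u0 uN0 subrr bilin0l.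
move=> j /andP[j1 jk]; have jK : (1 <= j <= K)%N by rewrite j1 (leq_trans jk).
have [truthF truthG] := truth j jK.
have [hf hg] := Hfg j mu jK Dmu.
apply: (energy_step hX hY mbil msym mpos abil asym bbil dt0 aLB0 gaUB0 bLB0 gmUB0
  aLB_le gaUB_ge bLB_le gmUB_ge (res1_functional dt mbil abil bbil _ _ _ hf)
  (res2_functional bbil _ hg) (q := p mu j - pN N mu j)).
- exact: (res1_error mbil abil bbil _ _ _ truthF).
- exact: (res2_error bbil _ truthG).
Qed.
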